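(* Let $(I,\preccurlyeq)$ be a directed set, let $S(\Lambda^{\preccurlyeq})$ and $S(M^{\preccurlyeq})$ be direct spectra over $(I,\preccurlyeq)$ with sets $\lambda_0(i)$, $\mu_0(i)$, transports $\lambda^{\preccurlyeq}_{ij}$, $\mu^{\preccurlyeq}_{ij}$ and Bishop spaces $\mathcal F_i=(\lambda_0(i),F_i)$, $\mathcal G_i=(\mu_0(i),G_i)$, and let $\Psi:S(\Lambda^{\preccurlyeq})\Rightarrow S(M^{\preccurlyeq})$ be a direct spectrum-map. Then: (i) for every $i\in I$, $e^{\Lambda^{\preccurlyeq}}_i\in\mathrm{Mor}(\mathcal F_i,\sum^{\preccurlyeq}_{i\in I}\mathcal F_i)$; (ii) if $\Psi$ is continuous, then $\Sigma^{\preccurlyeq}\Psi\in\mathrm{Mor}(\sum^{\preccurlyeq}_{i\in I}\mathcal F_i,\sum^{\preccurlyeq}_{i\in I}\mathcal G_i)$.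
   Context: Work in Bishop-style constructive mathematics. A directed set: a set with a reflexive transitive relation respecting equality, any two elements having a common upper bound. A direct family over $(I,\preccurlyeq)$: sets $\lambda_0(i)$ and functions $\lambda^{\preccurlyeq}_{ij}:\lambda_0(i)\to\lambda_0(j)$ for $i\preccurlyeq j$ with $\lambda^{\preccurlyeq}_{ii}=\mathrm{id}$ and $\lambda^{\preccurlyeq}_{ik}=\lambda^{\preccurlyeq}_{jk}\circ\lambda^{\preccurlyeq}_{ij}$. Bishop spaces: a Bishop topology on $X$ is a set $F$ of functions $X\to\mathbb R$ containing constants, closed under addition, composition with functions $\mathbb R\to\mathbb R$ uniformly continuous on every $[-n,n]$, and uniform limits; $\bigvee F_0$ = least Bishop topology containing $F_0$; Bishop morphism $(X,F)\to(Y,G)$: a function $h$ with $g\circ h\in F$ for all $g\in G$. A direct spectrum: a direct family with Bishop topologies $F_i$ on $\lambda_0(i)$ such that each $\lambda^{\preccurlyeq}_{ij}$ is a Bishop morphism $\mathcal F_i\to\mathcal F_j$. A direct spectrum-map $\Psi$: functions $\Psi_i:\lambda_0(i)\to\mu_0(i)$ with $\Psi_j\circ\lambda^{\preccurlyeq}_{ij}=\mu^{\preccurlyeq}_{ij}\circ\Psi_i$ for $i\preccurlyeq j$; continuous if each $\Psi_i\in\mathrm{Mor}(\mathcal F_i,\mathcal G_i)$. Sum space: $\sum^{\preccurlyeq}_{i\in I}\lambda_0(i)$ = pairs $(i,x)$, $x\in\lambda_0(i)$, with $(i,x)=(j,y)$ iff there is $k$ with $i,j\preccurlyeq k$ and $\lambda^{\preccurlyeq}_{ik}(x)=\lambda^{\preccurlyeq}_{jk}(y)$.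 $\prod^{\succcurlyeq}F_i$ = dependent assignments $\Theta$ with $\Theta_i\in F_i$ and $\Theta_i=\Theta_j\circ\lambda^{\preccurlyeq}_{ij}$ for $i\preccurlyeq j$; $f_\Theta(i,x):=\Theta_i(x)$ (a function on $\sum^{\preccurlyeq}$). The sum Bishop space is $\sum^{\preccurlyeq}_{i}\mathcal F_i=(\sum^{\preccurlyeq}\lambda_0(i),\bigvee\{f_\Theta:\Theta\in\prod^{\succcurlyeq}F_i\})$; similarly for $M$. $e^{\Lambda^{\preccurlyeq}}_i:\lambda_0(i)\to\sum^{\preccurlyeq}\lambda_0(i)$ is $x\mapsto(i,x)$, and $\Sigma^{\preccurlyeq}\Psi(i,x):=(i,\Psi_i(x))$. *)

From Stdlib Require Import Reals.
Open Scope R_scope.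
Set Implicit Arguments.

Definition Bic (phi : R -> R) : Prop :=
  forall (n : nat) (eps : R), 0 < eps ->
    exists delta : R, 0 < delta /\
      forall x y : R, Rabs x <= INR n -> Rabs y <= INR n ->
        Rabs (x - y) < delta -> Rabs (phi x - phi y) < eps.

Definition unif_limit (X : Type) (fs : nat -> X -> R) (f : X -> R) : Prop :=
  forall eps : R, 0 < eps -> exists N : nat, forall n : nat, (N <= n)%nat ->
    forall x : X, Rabs (fs n x - f x) <= eps.

Record is_bishop_topology (X : Type) (F : (X -> R) -> Prop) : Prop := {
  bt_const : forall c : R, F (fun _ => c);
  bt_add : forall f g, F f -> F g -> F (fun x => f x + g x);
  bt_comp : forall f phi, F f -> Bic phi -> F (fun x => phi (f x));
  bt_ulim : forall (fs : nat -> X -> R) (f : X -> R),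
      (forall n, F (fs n)) -> unif_limit fs f -> F f }.

Inductive bigvee (X : Type) (F0 : (X -> R) -> Prop) : (X -> R) -> Prop :=
  | bv_base : forall f, F0 f -> bigvee F0 f
  | bv_const : forall c : R, bigvee F0 (fun _ => c)
  | bv_add : forall f g, bigvee F0 f -> bigvee F0 g -> bigvee F0 (fun x => f x + g x)
  | bv_comp : forall f phi, bigvee F0 f -> Bic phi -> bigvee F0 (fun x => phi (f x))
  | bv_ulim : forall (fs : nat -> X -> R) (f : X -> R),
      (forall n, bigvee F0 (fs n)) -> unif_limit fs f -> bigvee F0 f.

Definition Mor (X Y : Type) (eqX : X -> X -> Prop) (eqY : Y -> Y -> Prop)
  (F : (X -> R) -> Prop) (G : (Y -> R) -> Prop) (h : X -> Y) : Prop :=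
  (forall x x', eqX x x' -> eqY (h x) (h x')) /\
  (forall g, G g -> F (fun x => g (h x))).

(* Directed set (I, le); equality on I is Leibniz. *)
Definition directed (I : Type) (le : I -> I -> Prop) : Prop :=
  (forall i, le i i) /\
  (forall i j k, le i j -> le j k -> le i k) /\
  (forall i j, exists k, le i k /\ le j k).

Definition direct_family (I : Type) (le : I -> I -> Prop) (lam0 : I -> Type)
  (lam : forall i j, le i j -> lam0 i -> lam0 j) : Prop :=
  (forall i (H : le i i) (x : lam0 i), lam i i H x = x) /\
  (forall i j k (Hij : le i j) (Hjk : le j k) (Hik : le i k) (x : lam0 i),
      lam i k Hik x = lam j k Hjk (lam i j Hij x)).

Definition direct_spectrum (I : Type) (le : I -> I -> Prop) (lam0 : I -> Type)
  (lam : forall i j, le i j -> lam0 i -> lam0 j)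
  (F : forall i, (lam0 i -> R) -> Prop) : Prop :=
  @direct_family I le lam0 lam /\
  (forall i, is_bishop_topology (F i)) /\
  (forall i j (H : le i j), Mor (@eq (lam0 i)) (@eq (lam0 j)) (F i) (F j) (lam i j H)).

Definition spectrum_map (I : Type) (le : I -> I -> Prop)
  (lam0 mu0 : I -> Type)
  (lam : forall i j, le i j -> lam0 i -> lam0 j)
  (mu : forall i j, le i j -> mu0 i -> mu0 j)
  (Psi : forall i, lam0 i -> mu0 i) : Prop :=
  forall i j (H : le i j) (x : lam0 i), Psi j (lam i j H x) = mu i j H (Psi i x).

Definition continuous_spectrum_map (I : Type)
  (lam0 mu0 : I -> Type)
  (F : forall i, (lam0 i -> R) -> Prop) (G : forall i, (mu0 i -> R) -> Prop)
  (Psi : forall i, lam0 i -> mu0 i) : Prop :=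
  forall i, Mor (@eq (lam0 i)) (@eq (mu0 i)) (F i) (G i) (Psi i).

Definition Sum (I : Type) (lam0 : I -> Type) : Type := {i : I & lam0 i}.

Definition sigma_eq (I : Type) (le : I -> I -> Prop) (lam0 : I -> Type)
  (lam : forall i j, le i j -> lam0 i -> lam0 j) (u v : Sum lam0) : Prop :=
  exists k (Hik : le (projT1 u) k) (Hjk : le (projT1 v) k),
    lam _ k Hik (projT2 u) = lam _ k Hjk (projT2 v).

Definition in_prod_ge (I : Type) (le : I -> I -> Prop) (lam0 : I -> Type)
  (lam : forall i j, le i j -> lam0 i -> lam0 j)
  (F : forall i, (lam0 i -> R) -> Prop) (Theta : forall i, lam0 i -> R) : Prop :=
  (forall i, F i (Theta i)) /\
  (forall i j (H : le i j) (x : lam0 i), Theta i x = Theta j (lam i j H x)).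

Definition f_Theta (I : Type) (lam0 : I -> Type) (Theta : forall i, lam0 i -> R)
  (u : Sum lam0) : R := Theta (projT1 u) (projT2 u).

Definition sigma_top (I : Type) (le : I -> I -> Prop) (lam0 : I -> Type)
  (lam : forall i j, le i j -> lam0 i -> lam0 j)
  (F : forall i, (lam0 i -> R) -> Prop) : (Sum lam0 -> R) -> Prop :=
  bigvee (fun f => exists Theta, @in_prod_ge I le lam0 lam F Theta /\ f = f_Theta Theta).

Definition e_in (I : Type) (lam0 : I -> Type) (i : I) (x : lam0 i) : Sum lam0 :=
  existT lam0 i x.

Definition Sigma_map (I : Type) (lam0 mu0 : I -> Type)
  (Psi : forall i, lam0 i -> mu0 i) (u : Sum lam0) : Sum mu0 :=
  existT mu0 (projT1 u) (Psi (projT1 u) (projT2 u)).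

(* Bishop's lifting principle: to check that h is a morphism into a space whose
   topology is generated by G0, it suffices to test the generators, because the
   functions g with g o h in F form a Bishop topology.  The generators f_Theta of
   the sum topology pull back along e_i to Theta_i in F_i, and along Sigma Psi to
   f_Theta' with Theta'_i = Theta_i o Psi_i, which is again a compatible
   assignment when Psi commutes with the transports and each Psi_i is continuous. *)

From Stdlib Require Import Reals.
Open Scope R_scope.

Lemma unif_limit_comp {X Y : Type} (h : X -> Y) {fs : nat -> Y -> R} {f : Y -> R} :
  unif_limit fs f -> unif_limit (fun n x => fs n (h x)) (fun x => f (h x)).
Proof.
  intros Hu eps Heps. destruct (Hu eps Heps) as [N HN].
  exists N. intros n Hn x. exact (HN n Hn (h x)).
Qed.

Lemma bishop_topology_precomp {X Y : Type} {F : (X -> R) -> Prop} (h : X -> Y) :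
  is_bishop_topology F -> is_bishop_topology (fun g : Y -> R => F (fun x => g (h x))).
Proof.
  intros HF. split.
  - intros c. apply (bt_const HF).
  - intros f g Hf Hg. exact (bt_add HF _ _ Hf Hg).
  - intros f phi Hf Hphi. exact (bt_comp HF _ Hf Hphi).
  - intros fs f Hfs Hu. exact (bt_ulim HF Hfs (unif_limit_comp h Hu)).
Qed.

Lemma bigvee_least {X : Type} {F0 F : (X -> R) -> Prop} :
  is_bishop_topology F -> (forall f, F0 f -> F f) -> forall f, bigvee F0 f -> F f.
Proof.
  intros HF H0 f Hf.
  induction Hf as [f Hf|c|f g _ IHf _ IHg|f phi _ IHf Hphi|fs f _ IH Hu].
  - exact (H0 f Hf).
  - apply (bt_const HF).
  - exact (bt_add HF _ _ IHf IHg).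
  - exact (bt_comp HF _ IHf Hphi).
  - exact (bt_ulim HF IH Hu).
Qed.

Lemma bigvee_bishop_topology {X : Type} (F0 : (X -> R) -> Prop) :
  is_bishop_topology (bigvee F0).
Proof.
  split.
  - apply bv_const.
  - apply bv_add.
  - apply bv_comp.
  - apply bv_ulim.
Qed.

Lemma Mor_into_bigvee {X Y : Type} (eqX : X -> X -> Prop) (eqY : Y -> Y -> Prop)
    (F : (X -> R) -> Prop) (G0 : (Y -> R) -> Prop) (h : X -> Y) :
  is_bishop_topology F ->
  (forall x x', eqX x x' -> eqY (h x) (h x')) ->
  (forall g, G0 g -> F (fun x => g (h x))) ->
  Mor eqX eqY F (bigvee G0) h.
Proof.
  intros HF Hext Hgen. split; [exact Hext |].
  exact (bigvee_least (bishop_topology_precomp h HF) Hgen).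
Qed.

Section SumSpace.

Context {I : Type} {le : I -> I -> Prop}.

Lemma e_in_Mor {lam0 : I -> Type} (lam : forall i j, le i j -> lam0 i -> lam0 j)
    {F : forall i, (lam0 i -> R) -> Prop} (i : I) :
  (forall i, le i i) -> is_bishop_topology (F i) ->
  Mor (@eq (lam0 i)) (@sigma_eq I le lam0 lam) (F i) (@sigma_top I le lam0 lam F)
      (e_in lam0 i).
Proof.
  intros Hrefl HFi. apply Mor_into_bigvee; [exact HFi | |].
  - intros x x' <-. exists i, (Hrefl i), (Hrefl i). reflexivity.
  - intros g [Theta [[HTheta _] ->]]. exact (HTheta i).
Qed.

Context {lam0 mu0 : I -> Type}
  {lam : forall i j, le i j -> lam0 i -> lam0 j}
  {mu : forall i j, le i j -> mu0 i -> mu0 j}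
  {Psi : forall i, lam0 i -> mu0 i}.

Hypothesis HPsi : spectrum_map le lam0 mu0 lam mu Psi.

Lemma Sigma_map_sigma_eq (u v : Sum lam0) :
  @sigma_eq I le lam0 lam u v ->
  @sigma_eq I le mu0 mu (Sigma_map mu0 Psi u) (Sigma_map mu0 Psi v).
Proof.
  destruct u as [i x], v as [j y]. intros [k [Hik [Hjk E]]]. simpl in *.
  exists k, Hik, Hjk. simpl. rewrite <- !HPsi, E. reflexivity.
Qed.

Lemma in_prod_ge_comp {F : forall i, (lam0 i -> R) -> Prop}
    {G : forall i, (mu0 i -> R) -> Prop} {Theta : forall i, mu0 i -> R} :
  continuous_spectrum_map lam0 mu0 F G Psi -> in_prod_ge le mu0 mu G Theta ->
  in_prod_ge le lam0 lam F (fun i x => Theta i (Psi i x)).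
Proof.
  intros Hc [HTheta Hcompat]. split.
  - intros i. exact (proj2 (Hc i) _ (HTheta i)).
  - intros i j H x. rewrite HPsi. apply Hcompat.
Qed.

Lemma Sigma_map_Mor {F : forall i, (lam0 i -> R) -> Prop}
    {G : forall i, (mu0 i -> R) -> Prop} :
  continuous_spectrum_map lam0 mu0 F G Psi ->
  Mor (@sigma_eq I le lam0 lam) (@sigma_eq I le mu0 mu)
      (@sigma_top I le lam0 lam F) (@sigma_top I le mu0 mu G) (Sigma_map mu0 Psi).
Proof.
  intros Hc. apply Mor_into_bigvee.
  - apply bigvee_bishop_topology.
  - exact Sigma_map_sigma_eq.
  - intros g [Theta [HTheta ->]]. apply bv_base.
    exists (fun i x => Theta i (Psi i x)).
    split; [exact (in_prod_ge_comp Hc HTheta) | reflexivity].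
Qed.

End SumSpace.

Theorem proposition7p7
  (I : Type) (le : I -> I -> Prop)
  (lam0 mu0 : I -> Type)
  (lam : forall i j, le i j -> lam0 i -> lam0 j)
  (mu : forall i j, le i j -> mu0 i -> mu0 j)
  (F : forall i, (lam0 i -> R) -> Prop) (G : forall i, (mu0 i -> R) -> Prop)
  (Psi : forall i, lam0 i -> mu0 i)
  (Hdir : directed le)
  (HL : @direct_spectrum I le lam0 lam F)
  (HM : @direct_spectrum I le mu0 mu G)
  (HPsi : @spectrum_map I le lam0 mu0 lam mu Psi) :
  (forall i : I,
     Mor (@eq (lam0 i)) (@sigma_eq I le lam0 lam) (F i) (@sigma_top I le lam0 lam F)
         (@e_in I lam0 i)) /\
  (@continuous_spectrum_map I lam0 mu0 F G Psi ->
     Mor (@sigma_eq I le lam0 lam) (@sigma_eq I le mu0 mu)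
         (@sigma_top I le lam0 lam F) (@sigma_top I le mu0 mu G)
         (@Sigma_map I lam0 mu0 Psi)).
Proof.
  destruct Hdir as [Hrefl _].
  destruct HL as [_ [HFtop _]].
  split.
  - intros i. exact (e_in_Mor lam i Hrefl (HFtop i)).
  - exact (Sigma_map_Mor HPsi).
Qed.
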